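(* Let $n\ge1$ and let $S=(s_I)_{I\subseteq[n]}\in(\mathbb{R}_{>0})^{2^n}$ with $s_\emptyset=1$ be a molecule given in $s$-coordinates. Identify $S$ with the tensor in $(\mathbb{R}^2)^{\otimes n}$ whose entry at $\varepsilon\in\{0,1\}^n$ is $s_{\{i:\varepsilon_i=1\}}$, and suppose this tensor has positive rank $k$. Then there exist weights $\lambda_1,\dots,\lambda_k>0$ with $\sum_j\lambda_j=1$ and molecules $S^{(1)},\dots,S^{(k)}$ with $n$ independent sites such that $S=\sum_{j=1}^k\lambda_j S^{(j)}$ (entrywise); in particular the binding polynomial of $S$ equals $\sum_{j=1}^k\lambda_j$ times the binding polynomial of $S^{(j)}$, i.e. the corresponding mixture of the $k$ molecules has the same binding curve as $S$. Moreover, $S$ cannot be written in this way using only $k-1$ molecules with $n$ independent sites.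
   Context: A molecule with $n$ sites is $W=(w_I)_{I\subseteq[n]}\in(\mathbb{R}_{>0})^{2^n}$ with $w_\emptyset=1$; its $s$-coordinates are $s_I=\prod_{I'\subseteq I}w_{I'}$ (a bijection of $(\mathbb{R}_{>0})^{2^n}$ onto itself, with $s_\emptyset=1$). The binding polynomial is $\sum_{k=0}^n a_k\Lambda^k$ with $a_k=\sum_{|I|=k}s_I$. A molecule has $n$ independent sites if $w_I=1$ for all $|I|>1$, equivalently $s_I=\prod_{i\in I}s_i$ for all $I$. A (positive) rank-one tensor is $v_1\otimes\dots\otimes v_n$ with $v_i=(s_i,t_i)\in(\mathbb{R}_{>0})^2$, whose entry at $\varepsilon\in\{0,1\}^n$ is $\prod_{i:\varepsilon_i=1}s_i\prod_{i:\varepsilon_i=0}t_i$; the positive rank of a tensor is the least number of such positive rank-one tensors summing to it. *)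

From HB Require Import structures.
From mathcomp Require Import all_boot all_order all_algebra.
Set Implicit Arguments. Unset Strict Implicit. Unset Printing Implicit Defensive.
Import Order.TTheory GRing.Theory Num.Theory.
Local Open Scope ring_scope.

Definition molecule_s (R : realFieldType) (n : nat) (S : {set 'I_n} -> R) : Prop :=
  (forall I, 0 < S I) /\ S set0 = 1.

Definition independent_sites (R : realFieldType) (n : nat) (S : {set 'I_n} -> R) : Prop :=
  molecule_s S /\ forall I : {set 'I_n}, S I = \prod_(i in I) S [set i].

Definition binding_poly (R : realFieldType) (n : nat) (S : {set 'I_n} -> R) : {poly R} :=
  \sum_(k < n.+1) (\sum_(I : {set 'I_n} | #|I| == k) S I) *: 'X^k.

(* Tensors in (R^2)^{\otimes n}, indexed by eps in {0,1}^n. *)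
Definition tensor (R : realFieldType) (n : nat) := {ffun 'I_n -> bool} -> R.

Definition tensor_of_s (R : realFieldType) (n : nat) (S : {set 'I_n} -> R) : tensor R n :=
  fun eps => S [set i | eps i].

(* Positive rank-one tensor v_1 (x) ... (x) v_n with v_i = (s_i, t_i) > 0. *)
Definition pos_rank_one (R : realFieldType) (n : nat) (T : tensor R n) : Prop :=
  exists (s t : 'I_n -> R), (forall i, 0 < s i /\ 0 < t i) /\
    forall eps : {ffun 'I_n -> bool},
      T eps = (\prod_(i | eps i) s i) * (\prod_(i | ~~ eps i) t i).

Definition pos_rank_decomp (R : realFieldType) (n : nat) (T : tensor R n) (m : nat) : Prop :=
  exists F : 'I_m -> tensor R n, (forall j, pos_rank_one (F j)) /\
    forall eps, T eps = \sum_(j < m) F j eps.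

Definition has_pos_rank (R : realFieldType) (n : nat) (T : tensor R n) (k : nat) : Prop :=
  pos_rank_decomp T k /\ forall m, pos_rank_decomp T m -> (k <= m)%N.

Definition mixture_of_independent (R : realFieldType) (n : nat) (S : {set 'I_n} -> R)
    (m : nat) (lam : 'I_m -> R) (Sj : 'I_m -> {set 'I_n} -> R) : Prop :=
  (forall j, 0 < lam j) /\ \sum_(j < m) lam j = 1 /\
  (forall j, independent_sites (Sj j)) /\
  forall I, S I = \sum_(j < m) lam j * Sj j I.

(* In a positive rank-one decomposition T = sum_j F_j of the tensor of S, each
   F_j divided by its entry at the all-zero index is the tensor of a molecule
   with independent sites, since its entries factor over the sites; these
   entries F_j(0) are positive weights summing to T(0) = s_emptyset = 1.
   Conversely, a mixture of m independent molecules is a sum of m positive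
   rank-one tensors. Hence mixtures with m components and decompositions with
   m terms correspond, and the minimality of the rank transfers. The binding
   polynomial is linear in S. *)
From HB Require Import structures.
From mathcomp Require Import all_boot all_order all_algebra.
Set Implicit Arguments. Unset Strict Implicit. Unset Printing Implicit Defensive.
Import Order.TTheory GRing.Theory Num.Theory.
Local Open Scope ring_scope.

Section PositiveRankOne.

Variables (R : realFieldType) (n : nat).

Definition ffun_of_set (I : {set 'I_n}) : {ffun 'I_n -> bool} := [ffun i => i \in I].

Lemma ffun_of_setE (I : {set 'I_n}) i : ffun_of_set I i = (i \in I).
Proof. exact: ffunE. Qed.

Lemma ffun_of_setK (I : {set 'I_n}) : [set i | ffun_of_set I i] = I.
Proof. by apply/setP => i; rewrite inE ffun_of_setE. Qed.

Lemma tensor_of_s_ffun (S : {set 'I_n} -> R) (I : {set 'I_n}) :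
  tensor_of_s S (ffun_of_set I) = S I.
Proof. by rewrite /tensor_of_s ffun_of_setK. Qed.

Lemma pos_rank_one_gt0 (T : tensor R n) eps : pos_rank_one T -> 0 < T eps.
Proof.
case=> s [t [st ->]].
by apply: mulr_gt0; apply: prodr_gt0 => i _; case: (st i).
Qed.

Lemma pos_rank_one_ratio (T : tensor R n) (I : {set 'I_n}) :
  pos_rank_one T ->
  T (ffun_of_set I) / T (ffun_of_set set0) =
  \prod_(i in I) (T (ffun_of_set [set i]) / T (ffun_of_set set0)).
Proof.
case=> s [t [st Tst]].
have TE J : T (ffun_of_set J) = \prod_(i in J) s i * \prod_(i in ~: J) t i.
  by rewrite Tst; congr (_ * _); apply: eq_bigl => i; rewrite ffun_of_setE ?inE.
have ratioE J : T (ffun_of_set J) / T (ffun_of_set set0) = \prod_(i in J) (s i / t i).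
  have t_neq0 : \prod_(i in ~: J) t i != 0.
    by apply/lt0r_neq0/prodr_gt0 => i _; case: (st i).
  rewrite !TE big_set0 mul1r setC0 [in X in _ / X](big_setID J) setTI setTD.
  by rewrite invfM mulrACA divff // mulr1 prodf_div.
by rewrite ratioE; apply: eq_bigr => i _; rewrite ratioE big_set1.
Qed.

Definition molecule_of_rank_one (T : tensor R n) : {set 'I_n} -> R :=
  fun I => T (ffun_of_set I) / T (ffun_of_set set0).

Lemma independent_molecule_of_rank_one (T : tensor R n) :
  pos_rank_one T -> independent_sites (molecule_of_rank_one T).
Proof.
move=> T1; split; last by move=> I; rewrite /molecule_of_rank_one pos_rank_one_ratio.
split; first by move=> I; apply: divr_gt0; apply: pos_rank_one_gt0.
by rewrite /molecule_of_rank_one divff // gt_eqF // pos_rank_one_gt0.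
Qed.

(* The constant c is absorbed into both factors of a single site, which is why
   at least one site is needed. *)
Lemma pos_rank_one_scaled_prod (c : R) (a : 'I_n -> R) :
  (0 < n)%N -> 0 < c -> (forall i, 0 < a i) ->
  pos_rank_one (fun eps : {ffun 'I_n -> bool} => c * \prod_(i | eps i) a i).
Proof.
move=> n_gt0 c_gt0 a_gt0.
have i0 : 'I_n := Ordinal n_gt0.
exists (fun i => c ^+ (i == i0) * a i), (fun i => c ^+ (i == i0)).
split=> [i|eps]; first by split; rewrite ?mulr_gt0 ?exprn_gt0.
have prod_c : \prod_i c ^+ (i == i0) = c.
  by rewrite (bigD1 i0) //= eqxx expr1 big1 ?mulr1 // => i /negbTE ->.
by rewrite big_split /= mulrAC -(bigID (fun i => eps i) predT) prod_c.
Qed.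

End PositiveRankOne.

Section Mixtures.

Variables (R : realFieldType) (n : nat).
Implicit Types (S : {set 'I_n} -> R) (m : nat).

Lemma pos_rank_decomp_gt0 S m :
  molecule_s S -> pos_rank_decomp (tensor_of_s S) m -> (0 < m)%N.
Proof.
case: m => // -[_ S0] [F [_ FT]].
have := FT (ffun_of_set set0); rewrite tensor_of_s_ffun S0 big_ord0.
by move/eqP; rewrite oner_eq0.
Qed.

Lemma mixture_of_pos_rank_decomp S m :
  molecule_s S -> pos_rank_decomp (tensor_of_s S) m ->
  exists (lam : 'I_m -> R) Sj, mixture_of_independent S lam Sj.
Proof.
case=> _ S0 [F [F1 FT]].
pose z := ffun_of_set (@set0 'I_n).
have Fz_gt0 j : 0 < F j z by exact: pos_rank_one_gt0 (F1 j).
exists (fun j => F j z), (fun j => molecule_of_rank_one (F j)).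
split=> //; split; first by rewrite -FT -S0 -tensor_of_s_ffun.
split=> [j|I]; first exact/independent_molecule_of_rank_one/F1.
rewrite -tensor_of_s_ffun FT; apply: eq_bigr => j _.
by rewrite /molecule_of_rank_one mulrC divfK // gt_eqF.
Qed.

Lemma pos_rank_decomp_of_mixture S m (lam : 'I_m -> R) Sj :
  (0 < n)%N -> mixture_of_independent S lam Sj ->
  pos_rank_decomp (tensor_of_s S) m.
Proof.
move=> n_gt0 [lam_gt0 [_ [Sj_ind SE]]].
exists (fun j eps => lam j * \prod_(i | eps i) Sj j [set i]); split.
  move=> j; apply: pos_rank_one_scaled_prod => // i.
  by case: (Sj_ind j) => -[].
move=> eps; rewrite /tensor_of_s SE; apply: eq_bigr => j _.
case: (Sj_ind j) => _ ->; congr (_ * _); apply: eq_bigl => i; by rewrite inE.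
Qed.

Lemma binding_poly_mix S m (lam : 'I_m -> R) (Sj : 'I_m -> {set 'I_n} -> R) :
  (forall I, S I = \sum_(j < m) lam j * Sj j I) ->
  binding_poly S = \sum_(j < m) lam j *: binding_poly (Sj j).
Proof.
move=> SE; rewrite /binding_poly.
under eq_bigr => d _ do rewrite (eq_bigr _ (fun I _ => SE I)) exchange_big scaler_suml.
rewrite exchange_big /=; apply: eq_bigr => j _.
rewrite scaler_sumr; apply: eq_bigr => d _.
by rewrite scalerA mulr_sumr.
Qed.

End Mixtures.

Theorem mainTheorem2 (R : realFieldType) (n : nat) (S : {set 'I_n} -> R) (k : nat) :
  (1 <= n)%N ->
  molecule_s S ->
  has_pos_rank (tensor_of_s S) k ->
  (exists (lam : 'I_k -> R) (Sj : 'I_k -> {set 'I_n} -> R),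
      mixture_of_independent S lam Sj /\
      binding_poly S = \sum_(j < k) lam j *: binding_poly (Sj j)) /\
  ~ (exists (lam : 'I_(k - 1) -> R) (Sj : 'I_(k - 1) -> {set 'I_n} -> R),
      mixture_of_independent S lam Sj).
Proof.
move=> n_gt0 Smol [Sk Smin]; split.
  have [lam [Sj mix]] := mixture_of_pos_rank_decomp Smol Sk.
  by exists lam, Sj; split; last exact: binding_poly_mix mix.2.2.2.
case=> lam [Sj mix].
have k_le := Smin _ (pos_rank_decomp_of_mixture n_gt0 mix).
have k_gt0 := pos_rank_decomp_gt0 Smol Sk.
by move: k_le; rewrite subn1 leqNgt ltn_predL k_gt0.
Qed.
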